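(* For every tree $T=(V,E)$ of order at least $3$, $$\sum_{uv\in E}|d(u)-d(v)| \;\ge\; \sum_{v\in V}(d(v)-2)^2 + 2(\Delta(T)-2).$$
   Context: $d(v)$ denotes the degree of a vertex $v$ in $T$, and $\Delta(T)$ is the maximum degree of $T$. *)

From mathcomp Require Import all_boot all_order all_algebra.
Set Implicit Arguments. Unset Strict Implicit. Unset Printing Implicit Defensive.

Definition simple_graph (T : finType) (e : rel T) : Prop :=
  symmetric e /\ irreflexive e.

Definition edges (T : finType) (e : rel T) : {set {set T}} :=
  [set [set u; v] | u in T, v in T & e u v].

Definition deg (T : finType) (e : rel T) (v : T) : nat := #|[set u | e v u]|.

Definition maxdeg (T : finType) (e : rel T) : nat := \max_(v : T) deg e v.

Definition is_tree (T : finType) (e : rel T) : Prop :=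
  [/\ simple_graph e, (forall u v : T, connect e u v) & #|edges e| = #|T|.-1].

(* For f = {u,v} (two elements), max - min of the two degrees = |d(u) - d(v)|. *)
Definition edge_irr (T : finType) (e : rel T) (f : {set T}) : nat :=
  (\max_(u in f) deg e u) - \big[minn/maxdeg e]_(u in f) deg e u.

From mathcomp Require Import all_boot all_order all_algebra zify.
Import GRing.Theory Num.Theory.
Set Implicit Arguments. Unset Strict Implicit. Unset Printing Implicit Defensive.

(* Root the tree at a vertex r of maximum degree Delta and let par w be the
   neighbour of w != r towards r.  The map w |-> {w, par w} is a bijection from
   the non-root vertices onto the edges, so sum d = 2(n-1) and
   sum d^2 = sum_(w != r) (d(w) + d(par w)), while
   d(par w) <= |d(w) - d(par w)| + d(w).  Expanding (d - 2)^2 and using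
   sum_(w != r) d(w) = 2(n-1) - Delta, the inequality reduces to
   Delta <= 2(n-1). *)

Lemma exists_descending_parent (T : finType) (e : rel T) (r : T) :
  (forall v, connect e v r) ->
  exists (par : T -> T) (rank : T -> nat),
    forall v, v != r -> e v (par v) && (rank (par v) < rank v).
Proof.
move=> conn_r.
have path_len v : exists k, [exists t : k.-tuple T, path e v t && (last v t == r)].
  have /connectP[p p_path p_last] := conn_r v.
  exists (size p); apply/existsP; exists (in_tuple p).
  by rewrite /= p_path -p_last eqxx.
pose rank v := ex_minn (path_len v).
have descent v : v != r -> exists u, e v u && (rank u < rank v).
  move=> vr; rewrite /rank; case: ex_minnP => k /existsP[t /andP[t_path t_last]] _.
  case: t t_path t_last => [[|u s] /= /eqP size_s].
    by move=> _ /eqP v_r; rewrite v_r eqxx in vr.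
  move=> /andP[evu s_path] s_last; exists u; rewrite evu /= -size_s ltnS.
  case: ex_minnP => k' _; apply.
  by apply/existsP; exists (in_tuple s); rewrite /= s_path s_last.
exists (fun v => odflt r [pick u | e v u && (rank u < rank v)]), rank => v vr /=.
case: pickP => [u //|none]; have [u] := descent v vr.
by rewrite none.
Qed.

Lemma deg_le_edge_irr (T : finType) (e : rel T) (u v : T) :
  (deg e v <= edge_irr e [set u; v] + deg e u)%N.
Proof.
have max_ge : (deg e v <= \max_(x in [set u; v]) deg e x)%N.
  by apply: leq_bigmax_cond; rewrite set22.
have min_le : (\big[minn/maxdeg e]_(x in [set u; v]) deg e x <= deg e u)%N.
  by rewrite -minEnat; exact: (@Order.TotalTheory.bigmin_le_cond _ nat _ _ _ _ _ (set21 u v)).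
by rewrite /edge_irr; lia.
Qed.

Lemma deg_sum1 (T : finType) (e : rel T) (v : T) : deg e v = (\sum_(u | e v u) 1)%N.
Proof. by rewrite /deg -sum1_card; apply: eq_bigl => u; rewrite inE. Qed.

Section ParentEdges.

Variables (T : finType) (e : rel T) (r : T) (par : T -> T) (rank : T -> nat).
Hypotheses (e_sym : symmetric e) (e_irr : irreflexive e).
Hypothesis par_descends : forall v, v != r -> e v (par v) && (rank (par v) < rank v).
Hypothesis card_edges : #|edges e| = #|T|.-1.

Lemma par_edge v : v != r -> e v (par v).
Proof. by move=> /par_descends/andP[]. Qed.

Lemma par_par_neq v : v != r -> par v != r -> par (par v) != v.
Proof.
move=> /par_descends/andP[_ rank_v] /par_descends/andP[_ rank_pv].
by apply: contraTneq (ltn_trans rank_pv rank_v) => ->; rewrite ltnn.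
Qed.

Lemma parent_edge_inj : {in [set~ r] &, injective (fun v => [set v; par v])}.
Proof.
move=> v w; rewrite /= !in_setC1 => vr wr /= E.
have : v \in [set w; par w] by rewrite -E set21.
rewrite !inE => /orP[/eqP // | /eqP v_pw].
have : w \in [set v; par v] by rewrite E set21.
rewrite !inE => /orP[/eqP // | /eqP w_pv].
by move: (par_par_neq wr); rewrite -v_pw -w_pv eqxx vr => /(_ isT).
Qed.

Lemma edges_parentE : edges e = (fun v => [set v; par v]) @: [set~ r].
Proof.
apply/esym/eqP; rewrite eqEcard card_in_imset; last exact: parent_edge_inj.
rewrite card_edges cardsC1 leqnn andbT.
apply/subsetP => f /imsetP[v]; rewrite in_setC1 => vr ->.
by apply/imset2P; exists v (par v); rewrite ?inE ?par_edge.
Qed.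

Lemma adj_parent_orient v u :
  e v u -> ((v != r) && (u == par v)) + ((u != r) && (v == par u)) = 1.
Proof.
move=> evu; have vu : v != u by apply: contraTneq evu => ->; rewrite e_irr.
have : [set v; u] \in edges e by apply/imset2P; exists v u; rewrite ?inE.
rewrite edges_parentE => /imsetP[w]; rewrite in_setC1 => wr E.
have : v \in [set w; par w] by rewrite -E set21.
have : u \in [set w; par w] by rewrite -E set22.
have no_back : (par w != r) && (w == par (par w)) = false.
  by have [//|pwr] := eqVneq (par w) r; rewrite eq_sym (negbTE (par_par_neq wr pwr)).
rewrite !inE => /orP[]/eqP u_w /orP[]/eqP v_w; rewrite u_w v_w /= ?eqxx in vu *.
all: by rewrite // wr no_back.
Qed.

Lemma sum_adj (F : T -> T -> nat) :
  (\sum_v \sum_(u | e v u) F v u = \sum_(w | w != r) (F w (par w) + F (par w) w))%N.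
Proof.
transitivity (\sum_v \sum_u (((v != r) && (u == par v)) * F v u
                            + ((u != r) && (v == par u)) * F v u))%N.
  apply: eq_bigr => v _; rewrite big_mkcond; apply: eq_bigr => u _.
  have [evu | nevu] := boolP (e v u); first by rewrite -mulnDl (adj_parent_orient evu) mul1n.
  have [/andP[vr /eqP u_pv] | _] := boolP ((v != r) && (u == par v)).
    by rewrite u_pv par_edge in nevu.
  have [/andP[ur /eqP v_pu] | _] //= := boolP ((u != r) && (v == par u)).
  by rewrite v_pu e_sym par_edge in nevu.
under eq_bigr => v _ do rewrite big_split /=.
rewrite big_split [RHS]big_split /=; congr (_ + _)%N; last rewrite exchange_big /=.
all: rewrite [RHS]big_mkcond; apply: eq_bigr => v _.
all: rewrite (bigD1 (par v)) //= eqxx andbT big1 ?addn0 => [|u /negbTE->]; last by rewrite andbF.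
all: by case: (v != r); rewrite ?mul1n.
Qed.

Lemma sum_deg : (\sum_v deg e v = 2 * #|T|.-1)%N.
Proof.
rewrite (eq_bigr _ (fun v _ => deg_sum1 e v)) sum_adj sum_nat_const.
by rewrite -(cardC1 r) mulnC; congr (_ * _)%N; apply: eq_card => v; rewrite !inE.
Qed.

Lemma sum_deg_sqr :
  (\sum_v deg e v * deg e v
     = \sum_(w | w != r) deg e w + \sum_(w | w != r) deg e (par w))%N.
Proof.
rewrite -big_split -(sum_adj (fun v _ => deg e v)); apply: eq_bigr => v _.
by rewrite {1}deg_sum1 big_distrl; apply: eq_bigr => u _; apply: mul1n.
Qed.

Lemma sum_edge_irr :
  (\sum_(f in edges e) edge_irr e f = \sum_(w | w != r) edge_irr e [set w; par w])%N.
Proof.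
rewrite edges_parentE big_imset /=; last exact: parent_edge_inj.
by apply: eq_bigl => w; rewrite in_setC1.
Qed.

End ParentEdges.

Local Open Scope ring_scope.

Lemma sumz_nat (I : finType) (P : pred I) (F : I -> nat) :
  \sum_(i | P i) (F i)%:Z = (\sum_(i | P i) F i)%N%:Z.
Proof. by rewrite (big_morph Posz PoszD (erefl 0%:Z)). Qed.

Lemma sum_sqr_subn2 (T : finType) (F : T -> nat) :
  \sum_v ((F v)%:Z - 2) ^+ 2
    = (\sum_v F v * F v)%N%:Z - 4 * (\sum_v F v)%N%:Z + 4 * #|T|%:Z.
Proof.
rewrite -sum1_card -!sumz_nat !mulr_sumr -sumrB -big_split /=.
by apply: eq_bigr => v _; rewrite expr2; lia.
Qed.

Theorem theorem4 (T : finType) (e : rel T) :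
  is_tree e -> (3 <= #|T|)%N ->
  (\sum_(f in edges e) (edge_irr e f)%:Z)
    >= \sum_(v : T) ((deg e v)%:Z - 2) ^+ 2 + 2 * ((maxdeg e)%:Z - 2).
Proof.
move=> [[e_sym e_irr] conn card_edges] n_ge3.
have [r max_deg_r] := eq_bigmax (deg e) (ltnW (ltnW n_ge3)).
have [par [rank par_descends]] := exists_descending_parent (fun v => conn v r).
have deg_total := sum_deg e_sym e_irr par_descends card_edges.
have deg_sqr := sum_deg_sqr e_sym e_irr par_descends card_edges.
have irr_total := sum_edge_irr par_descends card_edges.
have deg_split : (\sum_v deg e v = deg e r + \sum_(w | w != r) deg e w)%N.
  by rewrite (bigD1 r).
have par_deg : (\sum_(w | w != r) deg e (par w)
    <= \sum_(w | w != r) edge_irr e [set w; par w] + \sum_(w | w != r) deg e w)%N.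
  by rewrite -big_split; apply: leq_sum => w _; apply: deg_le_edge_irr.
rewrite sum_sqr_subn2 sumz_nat irr_total /maxdeg max_deg_r.
lia.
Qed.
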